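(* Let $X$ be a scalable monoid over a ring $R$, $S$ a coherent system of unit elements for $X$, and $T\subseteq S$ a normal submonoid of $X$. Then $X/T$ is a scalable monoid, $[t]_T=[1_X]_T$ for every $t\in T$, and $S/T=\{[s]_T\mid s\in S\}$ is a coherent system of unit elements for $X/T$.
   Context: A scalable monoid over a (unital, associative) ring $R$ is a monoid $X$ (identity $1_X$, product written $xy$) together with a map $R\times X\to X$, $(\alpha,x)\mapsto\alpha\cdot x$, such that $1\cdot x=x$, $\alpha\cdot(\beta\cdot x)=\alpha\beta\cdot x$ and $\alpha\cdot(xy)=(\alpha\cdot x)y=x(\alpha\cdot y)$. In a scalable monoid $Y$, $x\sim y$ iff $\alpha\cdot x=\beta\cdot y$ for some $\alpha,\beta\in R$. A unit element is some $u\in Y$ such that every $x\sim u$ equals $\lambda\cdot u$ for some $\lambda\in R$, and $\lambda\cdot u=\lambda'\cdot u$ implies $\lambda=\lambda'$. A set $U\subseteq Y$ is dense if for every $x\in Y$ there is $u\in U$ with $u\sim x$, and sparse if $u\sim v$ implies $u=v$ for $u,v\in U$; a coherent system of unit elements for $Y$ is a submonoid of $Y$ that is a dense and sparse set of unit elements. A submonoid $T$ of $X$ is normal if $xT=Tx$ for all $x\in X$. For such $T$, $x\sim_T y$ iff $mx=ny$ for some $m,n\in T$; this is a congruence, $[x]_T$ denotes the class of $x$, and $X/T$ is the set of classes with $[x]_T[y]_T=[xy]_T$, $\lambda\cdot[x]_T=[\lambda\cdot x]_T$, identity $[1_X]_T$. *)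

From mathcomp Require Import all_boot all_algebra.
Set Implicit Arguments. Unset Strict Implicit. Unset Printing Implicit Defensive.
Import GRing.Theory.
Local Open Scope ring_scope.

Section ScalableMonoids.
Variable R : pzRingType.
Variable X : Type.
Variable mul : X -> X -> X.
Variable one : X.
Variable scale : R -> X -> X.

Definition is_scalable_monoid : Prop :=
  (forall x y z, mul x (mul y z) = mul (mul x y) z) /\
  (forall x, mul one x = x) /\
  (forall x, mul x one = x) /\
  (forall x, scale 1 x = x) /\
  (forall (a b : R) x, scale a (scale b x) = scale (a * b) x) /\
  (forall (a : R) x y, scale a (mul x y) = mul (scale a x) y) /\
  (forall (a : R) x y, scale a (mul x y) = mul x (scale a y)).

Definition ssim (x y : X) : Prop := exists a b : R, scale a x = scale b y.

Definition unit_element (u : X) : Prop :=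
  (forall x, ssim x u -> exists l : R, x = scale l u) /\
  (forall l l' : R, scale l u = scale l' u -> l = l').

Definition dense (U : X -> Prop) : Prop :=
  forall x, exists u, U u /\ ssim u x.

Definition sparse (U : X -> Prop) : Prop :=
  forall u v, U u -> U v -> ssim u v -> u = v.

Definition submonoid (U : X -> Prop) : Prop :=
  U one /\ (forall x y, U x -> U y -> U (mul x y)).

Definition coherent_system (U : X -> Prop) : Prop :=
  submonoid U /\ dense U /\ sparse U /\ (forall u, U u -> unit_element u).

End ScalableMonoids.

Section Quotient.
Variable X : Type.
Variable mul : X -> X -> X.
Variable one : X.

Definition normal_submonoid (T : X -> Prop) : Prop :=
  submonoid mul one T /\
  (forall x t, T t -> exists t', T t' /\ mul x t = mul t' x) /\
  (forall x t, T t -> exists t', T t' /\ mul t x = mul x t').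

Definition simT (T : X -> Prop) (x y : X) : Prop :=
  exists m n, T m /\ T n /\ mul m x = mul n y.

Definition cls (T : X -> Prop) (x : X) : X -> Prop := fun y => simT T x y.

Definition quot (T : X -> Prop) : Type :=
  { A : X -> Prop | exists x, A = cls T x }.

Definition qcls (T : X -> Prop) (x : X) : quot T :=
  exist _ (cls T x) (ex_intro _ x erefl).

Definition quot_set (T S : X -> Prop) : quot T -> Prop :=
  fun q => exists s, S s /\ q = qcls T s.


End Quotient.
Arguments quot_set [X] mul T S _.

From mathcomp Require Import all_boot all_algebra.
From Stdlib Require Import ProofIrrelevance PropExtensionality FunctionalExtensionality ClassicalEpsilon.
Local Open Scope ring_scope.
Set Implicit Arguments.
Unset Strict Implicit.

(* Normality of T makes ~_T a congruence for the product, and since scalars act through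
   either factor it is also compatible with scaling, so X/T inherits all the axioms from X.
   Every t in T lies in the monoid S, so t s is again in S for s in S: a similarity between
   classes of S lifts to a similarity in X between elements t s and t' s' of S, where
   sparseness and the unit property of S apply. *)

Section QuotientMonoid.
Variables (X : Type) (mul : X -> X -> X) (one : X) (T : X -> Prop).
Hypothesis mulA : associative mul.
Hypothesis T_normal : normal_submonoid mul one T.

Local Notation sim := (simT mul T).
Local Notation cl := (qcls mul T).

Let T_one : T one. Proof. by case: T_normal => [[]]. Qed.

Let T_mul x y : T x -> T y -> T (mul x y).
Proof. by case: T_normal => [[_ ?] _]; auto. Qed.

Let T_commute x {t} : T t -> exists t', T t' /\ mul x t = mul t' x.
Proof. by case: T_normal => _ [? _]; auto. Qed.

Lemma simT_refl x : sim x x.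
Proof. by exists one, one. Qed.

Lemma simT_sym {x y} : sim x y -> sim y x.
Proof. by case=> m [n [Tm [Tn e]]]; exists n, m. Qed.

Lemma simT_trans {x y z} : sim x y -> sim y z -> sim x z.
Proof.
move=> [m [n [Tm [Tn e1]]]] [m' [n' [Tm' [Tn' e2]]]].
have [t [Tt e3]] := T_commute n Tm'.
exists (mul t m), (mul n n'); split; [exact: T_mul | split; first exact: T_mul].
by rewrite -!mulA e1 mulA -e3 -mulA e2.
Qed.

Lemma simT_mul {x x' y y'} : sim x x' -> sim y y' -> sim (mul x y) (mul x' y').
Proof.
move=> [m [n [Tm [Tn ex]]]] [p [q [Tp [Tq ey]]]].
apply: (@simT_trans _ (mul x' y)).
  by exists m, n; do 2 split => //; rewrite !mulA ex.
have [p' [Tp' ep]] := T_commute x' Tp.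
have [q' [Tq' eq]] := T_commute x' Tq.
by exists p', q'; do 2 split => //; rewrite !mulA -ep -eq -!mulA ey.
Qed.

Lemma qcls_eqP x y : cl x = cl y <-> sim x y.
Proof.
split=> [e | xy].
  have : cls mul T y y by exact: simT_refl.
  by rewrite -[cls _ _ y]/(sval (cl y)) -e.
apply: subset_eq_compat; apply: functional_extensionality => z.
apply: propositional_extensionality; split; first exact: simT_trans (simT_sym xy).
exact: simT_trans xy.
Qed.

Lemma qcls_surj (q : quot mul T) : exists x, q = cl x.
Proof. by case: q => A [x eA]; exists x; apply: subset_eq_compat. Qed.

Definition quot_repr (q : quot mul T) : X :=
  proj1_sig (constructive_indefinite_description _ (qcls_surj q)).

Lemma quot_reprK q : cl (quot_repr q) = q.
Proof. by rewrite /quot_repr; case: constructive_indefinite_description. Qed.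

Lemma quot_ind (P : quot mul T -> Prop) : (forall x, P (cl x)) -> forall q, P q.
Proof. by move=> Pcl q; rewrite -(quot_reprK q). Qed.

Definition quot_mul (p q : quot mul T) : quot mul T :=
  cl (mul (quot_repr p) (quot_repr q)).

Lemma quot_mulE x y : quot_mul (cl x) (cl y) = cl (mul x y).
Proof. by apply/qcls_eqP; apply: simT_mul; apply/qcls_eqP; rewrite quot_reprK. Qed.

Lemma qcls_T (mul1x : left_id one mul) (mulx1 : right_id one mul) t :
  T t -> cl t = cl one.
Proof. by move=> Tt; apply/qcls_eqP; exists one, t; rewrite mul1x mulx1. Qed.

Lemma submonoid_quot_set (S : X -> Prop) :
  submonoid mul one S -> submonoid quot_mul (cl one) (quot_set mul T S).
Proof.
case=> S_one S_mul; split; first by exists one.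
move=> _ _ [s [Ss ->]] [s' [Ss' ->]].
by exists (mul s s'); split; [exact: S_mul | exact: quot_mulE].
Qed.

End QuotientMonoid.

Arguments quot_mul {X} mul T p q.

Section QuotientScalableMonoid.
Variables (R : pzRingType) (X : Type) (mul : X -> X -> X) (one : X).
Variables (scale : R -> X -> X) (T : X -> Prop).
Hypothesis mulA : associative mul.
Hypothesis T_normal : normal_submonoid mul one T.
Hypothesis scaleMr : forall a x y, scale a (mul x y) = mul x (scale a y).

Local Notation sim := (simT mul T).
Local Notation cl := (qcls mul T).
Local Notation qmul := (quot_mul mul T).

Definition quot_scale (a : R) (q : quot mul T) : quot mul T :=
  cl (scale a (quot_repr q)).

Local Notation qscale := quot_scale.

Lemma simT_scale a {x y} : sim x y -> sim (scale a x) (scale a y).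
Proof. by case=> m [n [Tm [Tn e]]]; exists m, n; rewrite -!scaleMr e. Qed.

Lemma quot_scaleE a x : qscale a (cl x) = cl (scale a x).
Proof.
by apply/(qcls_eqP mulA T_normal); apply: simT_scale;
  apply/(qcls_eqP mulA T_normal); rewrite quot_reprK.
Qed.

Let mulE := quot_mulE mulA T_normal.
Let qind := @quot_ind X mul T.

Lemma quot_scalable_monoid :
  is_scalable_monoid mul one scale -> is_scalable_monoid qmul (cl one) qscale.
Proof.
case=> mA [m1x [mx1 [s1 [sA [sMl sMr]]]]].
split; first by elim/qind=> x; elim/qind=> y; elim/qind=> z; rewrite !mulE mA.
split; first by elim/qind=> x; rewrite mulE m1x.
split; first by elim/qind=> x; rewrite mulE mx1.
split; first by elim/qind=> x; rewrite quot_scaleE s1.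
split; first by move=> a b; elim/qind=> x; rewrite !quot_scaleE sA.
split; move=> a; elim/qind=> x; elim/qind=> y; rewrite mulE !quot_scaleE mulE.
  by rewrite sMl.
by rewrite sMr.
Qed.

Lemma ssim_qcls x y : ssim scale x y -> ssim qscale (cl x) (cl y).
Proof. by case=> a [b e]; exists a, b; rewrite !quot_scaleE e. Qed.

Lemma qcls_ssim x y : ssim qscale (cl x) (cl y) ->
  exists m n, T m /\ T n /\ ssim scale (mul m x) (mul n y).
Proof.
case=> a [b]; rewrite !quot_scaleE => /(qcls_eqP mulA T_normal).
by case=> m [n [Tm [Tn e]]]; exists m, n; do 2 split => //; exists a, b; rewrite !scaleMr.
Qed.

Variable S : X -> Prop.
Hypothesis S_submonoid : submonoid mul one S.
Hypothesis T_sub_S : forall t, T t -> S t.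

Let S_Tmul {t s} : T t -> S s -> S (mul t s).
Proof. by case: S_submonoid => _ S_mul /T_sub_S; apply: S_mul. Qed.

Lemma dense_quot_set : dense scale S -> dense qscale (quot_set mul T S).
Proof.
move=> S_dense; elim/qind=> x; have [s [Ss sx]] := S_dense x.
by exists (cl s); split; [exists s | exact: ssim_qcls].
Qed.

Lemma sparse_quot_set : sparse scale S -> sparse qscale (quot_set mul T S).
Proof.
move=> S_sparse _ _ [s [Ss ->]] [s' [Ss' ->]] /qcls_ssim [m [n [Tm [Tn e]]]].
by apply/(qcls_eqP mulA T_normal); exists m, n; do 2 split => //; apply: S_sparse; auto.
Qed.

Lemma unit_element_qcls s : sparse scale S -> (forall u, S u -> unit_element scale u) ->
  S s -> unit_element qscale (cl s).
Proof.
move=> S_sparse S_unit Ss; split.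
  elim/qind=> x /qcls_ssim [m [n [Tm [Tn e]]]].
  have [l el] := (S_unit _ (S_Tmul Tn Ss)).1 _ e.
  exists l; rewrite quot_scaleE; apply/(qcls_eqP mulA T_normal).
  by exists m, n; rewrite -scaleMr.
move=> l l'; rewrite !quot_scaleE => /(qcls_eqP mulA T_normal) [m [n [Tm [Tn e]]]].
rewrite -!scaleMr in e.
have ems : mul m s = mul n s by apply: S_sparse; [auto | auto | exists l, l'].
by apply: (S_unit _ (S_Tmul Tm Ss)).2; rewrite {2}ems.
Qed.

End QuotientScalableMonoid.

Arguments quot_scale {R X} mul scale T a q.

Theorem propositionA1 (R : pzRingType) (X : Type) (mul : X -> X -> X) (one : X)
  (scale : R -> X -> X) (S T : X -> Prop) :
  is_scalable_monoid mul one scale ->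
  coherent_system mul one scale S ->
  (forall t, T t -> S t) ->
  normal_submonoid mul one T ->
  exists (qmul : quot mul T -> quot mul T -> quot mul T)
         (qscale : R -> quot mul T -> quot mul T),
    (forall x y, qmul (qcls mul T x) (qcls mul T y) = qcls mul T (mul x y)) /\
    (forall (a : R) x, qscale a (qcls mul T x) = qcls mul T (scale a x)) /\
    is_scalable_monoid qmul (qcls mul T one) qscale /\
    (forall t, T t -> qcls mul T t = qcls mul T one) /\
    coherent_system qmul (qcls mul T one) qscale (quot_set mul T S).
Proof.
move=> X_scalable [S_sub [S_dense [S_sparse S_unit]]] T_sub_S T_normal.
have [mulA [mul1x [mulx1 [_ [_ [_ scaleMr]]]]]] := X_scalable.
exists (quot_mul mul T), (quot_scale mul scale T).
split; first exact: (quot_mulE mulA T_normal).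
split; first exact: (quot_scaleE mulA T_normal scaleMr).
split; first exact: quot_scalable_monoid.
split; first by move=> t; apply: qcls_T.
split; first exact: (submonoid_quot_set mulA T_normal S_sub).
split; first exact: (dense_quot_set mulA T_normal scaleMr S_dense).
split; first exact: (sparse_quot_set mulA T_normal scaleMr S_sub T_sub_S S_sparse).
move=> _ [s [Ss ->]].
exact: (unit_element_qcls mulA T_normal scaleMr S_sub T_sub_S S_sparse S_unit Ss).
Qed.
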